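(* Let $N\ge3$ and $\sigma\in G_N$. Then $$\mathcal F\circ(\sigma\otimes\mathrm{id}_{\mathbb{Q}\langle\langle\widetilde X\rangle\rangle})=\Delta_\sigma\circ\mathcal F\qquad\text{and}\qquad\mathcal F\circ\widetilde\Delta_\sigma=(\sigma\otimes\mathrm{id}_{\mathbb{Q}\langle\langle X\rangle\rangle})\circ\mathcal F.$$
   Context: $\zeta_N=\exp(2\pi i/N)$, $\mu_N$ the complex $N$-th roots of unity, $\iota:\{1,\dots,N\}\to\mathbb{Z}/N\mathbb{Z}$ the residue-class bijection. $K\langle\langle\mathcal L\rangle\rangle$: noncommutative formal power series over $\mathcal L$. Alphabets $X=\{x_0\}\cup\{x_\zeta:\zeta\in\mu_N\}$, $\widetilde X=\{\tilde x\}\cup\{\tilde x_\alpha:\alpha\in\mathbb{Z}/N\mathbb{Z}\}$. $\mathcal F:\mathbb{Q}(\mu_N)\langle\langle\widetilde X\rangle\rangle\to\mathbb{Q}(\mu_N)\langle\langle X\rangle\rangle$ is the continuous $\mathbb{Q}(\mu_N)$-algebra isomorphism $\tilde x\mapsto x_0$, $\tilde x_\alpha\mapsto\sum_{m=1}^N\zeta_N^{-m\iota^{-1}(\alpha)}x_{\zeta_N^m}$. $G_N=\mathrm{Gal}(\mathbb{Q}(\mu_N)/\mathbb{Q})$; each $\sigma\in G_N$ has $\sigma(\zeta_N)=\zeta_N^k$ for a unique $k\in\{1,\dots,N-1\}$ coprime to $N$. $\sigma\otimes\mathrm{id}$ acts on a series by applying $\sigma$ to each coefficient: $\sum_wc_ww\mapsto\sum_w\sigma(c_w)w$.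 $\Delta_\sigma(\sum_wc_ww)=\sum_w\sigma(c_w)\delta_k(w)$ on $\mathbb{Q}(\mu_N)\langle\langle X\rangle\rangle$, where $\delta_k$ is the algebra automorphism $x_0\mapsto x_0$, $x_\zeta\mapsto x_{\zeta^k}$; $\widetilde\Delta_\sigma(\sum_wc_ww)=\sum_w\sigma(c_w)\tilde\delta_k(w)$ on $\mathbb{Q}(\mu_N)\langle\langle\widetilde X\rangle\rangle$, where $\tilde\delta_k$ is the algebra automorphism $\tilde x\mapsto\tilde x$, $\tilde x_\alpha\mapsto\tilde x_{\iota(k)\alpha}$. *)

From HB Require Import structures.
From mathcomp Require Import all_boot all_order all_algebra all_field.
Unset Printing Implicit Defensive.
Import GRing.Theory.
Local Open Scope ring_scope.

(* Noncommutative formal power series over a finite alphabet A with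
   coefficients in L: a coefficient for every word (seq A). *)
Definition series (L : fieldType) (A : finType) := seq A -> L.

(* The continuous map  sum_w c_w w  |->  sum_w f(c_w) Phi(w), where Phi is
   the algebra morphism sending each letter a to the linear combination
   sum_b M a b * b.  Since Phi(w) = Phi(w_1)...Phi(w_n) is homogeneous of
   degree n, the coefficient of a word v in the result is
   sum_{|w| = |v|} f(c_w) * prod_i M w_i v_i. *)
Definition subst_series (L : fieldType) (A B : finType) (f : L -> L)
  (M : A -> B -> L) (S : series L A) : series L B :=
  fun v => \sum_(w : (size v).-tuple A)
             f (S w) * \prod_(i < size v) M (tnth w i) (tnth (in_tuple v) i).

Definition letter_mx (A B : finType) (L : fieldType) (phi : A -> B) : A -> B -> L :=
  fun a b => ((phi a == b) : nat)%:R.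

(* Alphabet X = {x_0} u {x_zeta : zeta in mu_N}:  None = x_0,
   Some j = x_{z^j}  (j : 'Z_N, j |-> z^j is the bijection Z/NZ -> mu_N).
   Alphabet Xt = {xt} u {xt_alpha : alpha in Z/NZ}: None = xt, Some a = xt_a. *)
Definition letX (N : nat) := option 'Z_N.
Definition letXt (N : nat) := option 'Z_N.

Definition iota_inv (N : nat) (a : 'Z_N) : nat := if val a == 0%N then N else val a.

Definition F_mx (L : fieldType) (N : nat) (z : L) (a : letXt N) (b : letX N) : L :=
  match a with
  | None => ((b == None) : nat)%:R
  | Some al => \sum_(1 <= m < N.+1)
                 (z ^+ (m * iota_inv N al))^-1 * ((b == Some (m%:R : 'Z_N)) : nat)%:R
  end.

Definition Fmap (L : fieldType) (N : nat) (z : L) (S : series L (letXt N))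
  : series L (letX N) := subst_series L (letXt N) (letX N) id (F_mx L N z) S.

Definition coef_act (L : fieldType) (A : finType) (sigma : L -> L) (S : series L A)
  : series L A := fun w => sigma (S w).

(* delta_k : x_0 |-> x_0, x_zeta |-> x_{zeta^k}  (z^j |-> z^{jk}). *)
Definition delta_k (N k : nat) (a : letX N) : letX N :=
  match a with None => None | Some j => Some (k%:R * j) end.

Definition deltat_k (N k : nat) (a : letXt N) : letXt N :=
  match a with None => None | Some al => Some (k%:R * al) end.

Definition Delta (L : fieldType) (N k : nat) (sigma : L -> L) (S : series L (letX N))
  : series L (letX N) := subst_series L (letX N) (letX N) sigma (letter_mx _ _ L (delta_k N k)) S.

Definition Deltat (L : fieldType) (N k : nat) (sigma : L -> L) (S : series L (letXt N))
  : series L (letXt N) := subst_series L (letXt N) (letXt N) sigma (letter_mx _ _ L (deltat_k N k)) S.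

Arguments Fmap {L N} z S _.
Arguments Delta {L} N k sigma S _.
Arguments Deltat {L} N k sigma S _.
Arguments coef_act {L A} sigma S _.

From HB Require Import structures.
From mathcomp Require Import all_boot all_order all_algebra all_field.
From Stdlib Require Import FunctionalExtensionality.
Import GRing.Theory.
Local Open Scope ring_scope.

(* F replaces each letter by a row of the matrix M = F_mx, with entries
   M xt_a x_(z^j) = z^(-j a) and M xt x_0 = 1.  An automorphism sigma with
   sigma z = z^k multiplies every exponent by k, and the factor k can be put
   either on the column letter or on the row letter:
   sigma (M a b) = M a (delta_k b) and M (deltat_k a) b = sigma (M a b).
   As k is a unit mod N, delta_k and deltat_k permute the alphabets, so the
   corresponding letter substitutions merely relabel words, and both identities
   follow by reindexing the sums defining the coefficients. *)

Section Substitution.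
Set Implicit Arguments.
Unset Strict Implicit.
Variable L : fieldType.

Lemma subst_seriesE (A B : finType) f M (S : series L A) n (v : n.-tuple B) :
  subst_series L A B f M S v =
  \sum_(w : n.-tuple A) f (S w) * \prod_(i < n) M (tnth w i) (tnth v i).
Proof.
case: v => s size_s; have size_sE := eqP size_s; subst n.
by rewrite /subst_series; have -> : Tuple size_s = in_tuple s by apply: val_inj.
Qed.

Lemma prod_letter_mx (A : finType) (d : A -> A) : injective d ->
  forall n (u w : n.-tuple A),
  \prod_(i < n) letter_mx A A L d (tnth u i) (tnth (map_tuple d w) i)
  = (u == w)%:R.
Proof.
move=> d_inj n u w; have [->|neq_uw] := eqVneq u w.
  by rewrite big1 // => i _; rewrite /letter_mx tnth_map eqxx.
have [i neq_i] : exists i, tnth u i != tnth w i.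
  apply/existsP; rewrite -negb_forall; apply: contra neq_uw => /forallP eq_uw.
  by apply/eqP/eq_from_tnth => i; apply/eqP.
rewrite (bigD1 i) //= /letter_mx tnth_map (inj_eq d_inj).
by rewrite (negbTE neq_i) mul0r.
Qed.

Lemma subst_letter_mx_map (A : finType) f (d : A -> A) (S : series L A) :
  injective d ->
  forall w, subst_series L A A f (letter_mx A A L d) S (map d w) = f (S w).
Proof.
move=> d_inj w; rewrite (subst_seriesE _ _ _ (map_tuple d (in_tuple w))).
under eq_bigr do rewrite prod_letter_mx //.
rewrite (bigD1 (in_tuple w)) //= eqxx mulr1 big1 ?addr0 // => u /negbTE->.
by rewrite mulr0.
Qed.

Variable sigma : {rmorphism L -> L}.

Lemma subst_coef_act (A B : finType) (M : A -> B -> L) (d : B -> B) :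
  injective d -> (forall a b, sigma (M a b) = M a (d b)) ->
  forall (S : series L A) v, subst_series L A B id M (coef_act sigma S) v
  = subst_series L B B sigma (letter_mx B B L d) (subst_series L A B id M S) v.
Proof.
move=> d_inj sigmaM S v; have [dinv _ dinvK] := injF_bij d_inj.
rewrite -[v](mapK dinvK) subst_letter_mx_map //; move: (map dinv v) => w.
rewrite (subst_seriesE _ _ _ (map_tuple d (in_tuple w))).
rewrite (subst_seriesE _ _ _ (in_tuple w)).
rewrite rmorph_sum; apply: eq_bigr => u _; rewrite rmorphM rmorph_prod.
by congr (_ * _); apply: eq_bigr => i _; rewrite tnth_map sigmaM.
Qed.

Lemma subst_letter_mx_subst (A B : finType) (M : A -> B -> L) (d : A -> A) :
  injective d -> (forall a b, M (d a) b = sigma (M a b)) ->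
  forall (S : series L A) v,
  subst_series L A B id M (subst_series L A A sigma (letter_mx A A L d) S) v
  = sigma (subst_series L A B id M S v).
Proof.
move=> d_inj dM S v; rewrite !(subst_seriesE _ _ _ (in_tuple v)) rmorph_sum.
have map_d_inj : injective (@map_tuple (size v) _ _ d).
  by move=> u w /(congr1 val) /(inj_map d_inj) /val_inj.
rewrite (reindex_inj map_d_inj); apply: eq_bigr => w _.
rewrite /= subst_letter_mx_map // rmorphM rmorph_prod; congr (_ * _).
by apply: eq_bigr => i _; rewrite tnth_map dM.
Qed.

End Substitution.

Section CyclotomicLetters.
Set Implicit Arguments.
Unset Strict Implicit.
Variable N : nat.
Hypothesis N_gt1 : (1 < N)%N.

Lemma iota_invE (x : 'Z_N) : (iota_inv N x)%:R = x.
Proof.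
rewrite /iota_inv; case: eqP => [x0|_]; last exact: natr_Zp.
by rewrite pchar_Zp //; apply: val_inj; rewrite x0.
Qed.

Lemma iota_inv_natK m : (0 < m <= N)%N -> iota_inv N m%:R = m.
Proof.
case/andP=> m_gt0; rewrite leq_eqVlt => /orP[/eqP->|m_ltN].
  by rewrite /iota_inv /= val_Zp_nat // modnn.
by rewrite /iota_inv /= val_Zp_nat // modn_small // eqn0Ngt m_gt0.
Qed.

Lemma iota_inv_bounds (x : 'Z_N) : (0 < iota_inv N x <= N)%N.
Proof.
have x_ltN : (val x < N)%N by rewrite -[X in (_ < X)%N](Zp_cast N_gt1) ltn_ord.
rewrite /iota_inv; case: eqP => [_|x_neq0]; first by rewrite (ltnW N_gt1) leqnn.
by rewrite lt0n; apply/andP; split; [apply/eqP | apply: ltnW].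
Qed.

Lemma delta_k_inj k : coprime k N -> injective (delta_k N k).
Proof.
move=> kN; have k_unit : (k%:R : 'Z_N) \is a GRing.unit.
  by rewrite unitZpE // coprime_sym.
by case=> [x|] [y|] // /(congr1 (omap ( *%R (k%:R)^-1))) /=; rewrite !mulKr.
Qed.

Variables (L : fieldType) (z : L).
Hypothesis z_prim : N.-primitive_root z.

Lemma expr_natZp m : z ^+ m = z ^+ val (m%:R : 'Z_N).
Proof.
by apply/eqP; rewrite (eq_prim_root_expr z_prim) /= val_Zp_nat // modn_mod.
Qed.

Lemma F_mx_some (a j : 'Z_N) :
  F_mx L N z (Some a) (Some j) = (z ^+ val (j * a))^-1.
Proof.
rewrite /F_mx (bigD1_seq (iota_inv N j)) ?iota_uniq //=; last first.
  by rewrite mem_index_iota ltnS iota_inv_bounds.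
rewrite iota_invE eqxx mulr1 expr_natZp natrM !iota_invE big1_seq ?addr0 //.
move=> m /andP[m_neq]; rewrite mem_index_iota ltnS => m_range.
case: eqP => [[j_m]|_]; last by rewrite mulr0.
by move: m_neq; rewrite j_m iota_inv_natK ?eqxx.
Qed.

Lemma F_mx_some_none (a : 'Z_N) : F_mx L N z (Some a) None = 0.
Proof. by rewrite /F_mx big1 // => m _; rewrite mulr0. Qed.

Variables (sigma : {rmorphism L -> L}) (k : nat).
Hypothesis sigma_z : sigma z = z ^+ k.

Lemma rmorph_expr_valZp (x : 'Z_N) : sigma (z ^+ val x) = z ^+ val (k%:R * x).
Proof. by rewrite rmorphXn sigma_z -exprM expr_natZp natrM natr_Zp. Qed.

Lemma F_mx_rmorph a b : sigma (F_mx L N z a b) = F_mx L N z a (delta_k N k b).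
Proof.
case: a b => [a|] [j|];
  rewrite /delta_k ?F_mx_some ?F_mx_some_none ?rmorph0 //.
  by rewrite fmorphV rmorph_expr_valZp mulrA.
all: by rewrite /= rmorph_nat.
Qed.

Lemma F_mx_deltat a b : F_mx L N z (deltat_k N k a) b = sigma (F_mx L N z a b).
Proof.
case: a b => [a|] [j|];
  rewrite /deltat_k ?F_mx_some ?F_mx_some_none ?rmorph0 //.
  by rewrite fmorphV rmorph_expr_valZp mulrCA.
all: by rewrite /= rmorph_nat.
Qed.

End CyclotomicLetters.

Theorem lemma3p13 (N : nat) (hN : (3 <= N)%N)
  (L : fieldExtType rat) (z : L)
  (hz : N.-primitive_root z) (hgen : <<1%VS; z>>%VS = fullv)
  (sigma : 'End(L)) (hsigma : kAut 1%VS fullv sigma)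
  (k : nat) (hk1 : (1 <= k < N)%N) (hkN : coprime k N)
  (hsk : sigma z = z ^+ k) :
  (forall S : series L (letXt N),
     Fmap z (coef_act sigma S) = Delta N k sigma (Fmap z S)) /\
  (forall S : series L (letXt N),
     Fmap z (Deltat N k sigma S) = coef_act sigma (Fmap z S)).
Proof.
have N_gt1 : (1 < N)%N by apply: ltnW.
have sigma_mult : monoid_morphism sigma.
  by apply/kHom_monoid_morphism; case/andP: hsigma.
pose sigmaR : {rmorphism L -> L} :=
  HB.pack (fun_of_lfun sigma) (GRing.isMonoidMorphism.Build _ _ _ sigma_mult).
have sigmaR_z : sigmaR z = z ^+ k := hsk.
(* delta_k N k and deltat_k N k are the same map on option 'Z_N. *)
have scale_inj := delta_k_inj N_gt1 hkN.
split=> S; apply: functional_extensionality.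
- exact: (subst_coef_act scale_inj (F_mx_rmorph N_gt1 hz sigmaR_z)).
- exact: (subst_letter_mx_subst scale_inj (F_mx_deltat N_gt1 hz sigmaR_z)).
Qed.
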